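(* Let $M\subset\mathbb{R}^{m+1}$ be an entire graphical translating soliton, i.e. the graph of a smooth function $u:\mathbb{R}^m\to\mathbb{R}$ which is a translating soliton with velocity $\operatorname{e}_{m+1}$. Suppose there are constants $C>0$, $r>0$ and $\alpha$ such that $|u(x)|\le C|x|^\alpha$ for all $x\in\mathbb{R}^m$ with $|x|\ge r$. Then $\alpha\ge2$.
   Context: A translating soliton is an oriented hypersurface whose scalar mean curvature satisfies $H=-\langle\operatorname{e}_{m+1},\xi\rangle$ ($\xi$ the unit normal), equivalently its mean curvature vector equals the normal projection of $\operatorname{e}_{m+1}$. *)

From Stdlib Require Import Reals.
From mathcomp Require Import all_boot.
Set Implicit Arguments. Unset Strict Implicit.

Open Scope R_scope.

Definition rsum (m : nat) (f : 'I_m -> R) : R :=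
  foldr (fun i acc => f i + acc) 0 (enum 'I_m).

Definition vec (m : nat) := 'I_m -> R.

Definition vnorm {m : nat} (x : vec m) : R :=
  sqrt (rsum (fun i : 'I_m => x i * x i)).

Definition shift {m : nat} (x : vec m) (i : 'I_m) (t : R) : vec m :=
  fun j => if j == i then x j + t else x j.

Definition has_partial {m : nat} (f : vec m -> R) (i : 'I_m) (x : vec m) (l : R) : Prop :=
  derivable_pt_lim (fun t => f (shift x i t)) 0 l.

Definition vcont {m : nat} (f : vec m -> R) : Prop :=
  forall x eps, 0 < eps -> exists d, 0 < d /\
    forall y : vec m, vnorm (fun j => y j - x j) < d -> Rabs (f y - f x) < eps.

Fixpoint Ck {m : nat} (k : nat) (f : vec m -> R) : Prop :=
  match k with
  | O => vcont f
  | S k' => vcont f /\ forall i : 'I_m, exists g : vec m -> R,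
              (forall x, has_partial f i x (g x)) /\ Ck k' g
  end.

Definition smooth {m : nat} (f : vec m -> R) : Prop := forall k, Ck k f.

(* Graph of u is a translating soliton with velocity e_{m+1}, i.e.
   div(Du / sqrt(1+|Du|^2)) = 1 / sqrt(1+|Du|^2), written in the equivalent
   non-divergence form  sum_{i,j} (delta_ij - u_i u_j/(1+|Du|^2)) u_ij = 1,
   where Du i, D2u i j are the first and second partial derivatives. *)
Definition translator_eq {m : nat} (Du : 'I_m -> vec m -> R)
  (D2u : 'I_m -> 'I_m -> vec m -> R) (x : vec m) : Prop :=
  rsum (fun i : 'I_m => rsum (fun j : 'I_m =>
     ((if i == j then 1 else 0)
       - Du i x * Du j x / (1 + rsum (fun k : 'I_m => Du k x * Du k x)))
     * D2u i j x)) = 1.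

(* Suppose alpha < 2 and let eps = 1/(4m). The growth bound puts
   w = u - eps |x|^2 below w(0) far from the origin, so w attains a global
   maximum at some point c, where D^2 u(c) <= 2 eps I. The translator
   equation says tr (A D^2 u(c)) = 1 with A = I - Du Du^T / (1 + |Du|^2);
   as A = B^2 for a symmetric B with 0 <= A <= I, this trace is at most
   2 eps tr A <= 2 eps m = 1/2, a contradiction. *)

From Stdlib Require Import Reals Lra FunctionalExtensionality Classical.
From mathcomp Require Import all_boot all_algebra.
From mathcomp Require Import Rstruct.
From mathcomp Require all_classical all_reals all_analysis Rstruct_topology.
Import GRing.Theory Num.Theory.
Open Scope R_scope.

Section FiniteSums.
Context {m : nat}.
Implicit Types (f g : 'I_m -> R).

Lemma rsum_bigE f : rsum f = (\sum_(i < m) f i)%R.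
Proof. by rewrite -big_enum unlock. Qed.

Lemma eq_rsum f g : (forall i, f i = g i) -> rsum f = rsum g.
Proof. by move=> fg; have -> : f = g by apply: functional_extensionality. Qed.

Lemma rsumD f g : rsum (fun i => f i + g i) = rsum f + rsum g.
Proof. by rewrite !rsum_bigE big_split. Qed.

Lemma rsumB f g : rsum (fun i => f i - g i) = rsum f - rsum g.
Proof. by rewrite !rsum_bigE sumrB. Qed.

Lemma rsumZ c f : rsum (fun i => c * f i) = c * rsum f.
Proof. by rewrite !rsum_bigE -mulr_sumr. Qed.

Lemma rsum_cst c : @rsum m (fun _ => c) = INR m * c.
Proof. by rewrite rsum_bigE sumr_const card_ord INRE RmultE mulr_natl. Qed.

Lemma rsum_le f g : (forall i, f i <= g i) -> rsum f <= rsum g.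
Proof. by move=> fg; rewrite !rsum_bigE; apply/RleP/ler_sum => i _; apply/RleP. Qed.

Lemma rsum_ge0 f : (forall i, 0 <= f i) -> 0 <= rsum f.
Proof. by move=> f0; rewrite rsum_bigE; apply/RleP/sumr_ge0 => i _; apply/RleP. Qed.

Lemma rsum_ge_term f i : (forall j, 0 <= f j) -> f i <= rsum f.
Proof.
move=> f0; rewrite rsum_bigE (bigD1 i) //=; apply/RleP; rewrite lerDl.
by apply/sumr_ge0 => j _; apply/RleP.
Qed.

Lemma Rabs_rsum_le f : Rabs (rsum f) <= rsum (fun i => Rabs (f i)).
Proof. by rewrite !rsum_bigE; apply/RleP; exact: (@ler_norm_sum R R). Qed.

Lemma rsum_exchange (F : 'I_m -> 'I_m -> R) :
  rsum (fun i => rsum (fun j => F i j)) = rsum (fun j => rsum (fun i => F i j)).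
Proof.
rewrite !rsum_bigE; under eq_bigr do rewrite rsum_bigE.
under [RHS]eq_bigr do rewrite rsum_bigE.
exact: exchange_big.
Qed.

Lemma rsum_delta f i : rsum (fun k => (if k == i then 1 else 0) * f k) = f i.
Proof.
rewrite rsum_bigE (bigD1 i) //= eqxx Rmult_1_l big1 ?addr0 // => k /negbTE ->.
exact: Rmult_0_l.
Qed.

End FiniteSums.

Definition sqnorm {m : nat} (x : vec m) : R := rsum (fun i => x i * x i).

Definition line {m : nat} (x p : vec m) (t : R) : vec m := fun j => x j + t * p j.

Lemma Rabs_sqr_sub_le a b d : Rabs (a - b) < d -> d <= 1 ->
  Rabs (a * a - b * b) <= d * (1 + 2 * Rabs b).
Proof.
move=> ab_lt d_le1.
have -> : a * a - b * b = (a - b) * ((a - b) + 2 * b) by ring.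
have S_le := Rabs_triang (a - b) (2 * b).
rewrite Rabs_mult (Rabs_pos_eq 2) in S_le; last lra.
have e_ge0 := Rabs_pos (a - b); have B_ge0 := Rabs_pos b.
rewrite Rabs_mult.
have : Rabs (a - b) * Rabs (a - b + 2 * b) <= Rabs (a - b) * (Rabs (a - b) + 2 * Rabs b).
  exact: Rmult_le_compat_l.
have : Rabs (a - b) * Rabs b <= d * Rabs b by apply: Rmult_le_compat_r; lra.
have : Rabs (a - b) * Rabs (a - b) <= d * 1 by apply: Rmult_le_compat; lra.
lra.
Qed.

Section Norms.
Context {m : nat}.
Implicit Types (x y a : vec m).

Lemma sqnorm_ge0 x : 0 <= sqnorm x.
Proof. by apply: rsum_ge0 => i; nra. Qed.

Lemma sqnorm0 : sqnorm (fun _ : 'I_m => 0) = 0.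
Proof. by rewrite /sqnorm rsum_cst; ring. Qed.

Lemma vnorm_sqr x : vnorm x * vnorm x = sqnorm x.
Proof. exact/sqrt_sqrt/sqnorm_ge0. Qed.

Lemma Rabs_coord_le_vnorm x j : Rabs (x j) <= vnorm x.
Proof.
rewrite /vnorm -sqrt_Rsqr_abs; apply: sqrt_le_1_alt; rewrite /Rsqr.
by apply: (rsum_ge_term (fun k => x k * x k)) => k; nra.
Qed.

Lemma vnorm_lt_of_coord_lt d : 0 < d -> exists eta, 0 < eta /\
  forall a, (forall j, Rabs (a j) < eta) -> vnorm a < d.
Proof.
move=> d_gt0; have m_ge0 := pos_INR m.
pose eta := d / (INR m + 1).
have eta_gt0 : 0 < eta by apply: Rdiv_lt_0_compat; lra.
have d_eta : d = eta * (INR m + 1) by rewrite /eta; field; lra.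
exists eta; split=> // a a_lt.
rewrite -(sqrt_square d); last lra.
apply: sqrt_lt_1_alt; split; first exact: sqnorm_ge0.
apply: (Rle_lt_trans _ (INR m * (eta * eta))); last by rewrite d_eta; nra.
rewrite -rsum_cst; apply: rsum_le => j.
have := a_lt j; have := Rabs_pos (a j); have := Rsqr_abs (a j); rewrite /Rsqr; nra.
Qed.

Lemma vcont_coordwise g : vcont g -> forall x eps, 0 < eps -> exists eta, 0 < eta /\
  forall y, (forall j, Rabs (y j - x j) < eta) -> Rabs (g y - g x) < eps.
Proof.
move=> g_cont x eps eps_gt0.
have [d [d_gt0 g_d]] := g_cont x eps eps_gt0.
have [eta [eta_gt0 eta_d]] := vnorm_lt_of_coord_lt _ d_gt0.
by exists eta; split=> // y y_near; apply/g_d/eta_d.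
Qed.

Lemma vcont_subZ {f g} c : vcont f -> vcont g -> vcont (fun y => f y - c * g y).
Proof.
move=> f_cont g_cont x eps eps_gt0.
pose k := Rabs c + 1; have k_gt0 : 0 < k by have := Rabs_pos c; rewrite /k; lra.
have [d1 [d1_gt0 f_d1]] := f_cont x (eps / 2) ltac:(lra).
have [d2 [d2_gt0 g_d2]] := g_cont x (eps / 2 / k) ltac:(apply: Rdiv_lt_0_compat; lra).
exists (Rmin d1 d2); split=> [|y y_near]; first exact: Rmin_pos.
have f_lt := f_d1 y (Rlt_le_trans _ _ _ y_near (Rmin_l _ _)).
have g_lt := g_d2 y (Rlt_le_trans _ _ _ y_near (Rmin_r _ _)).
have cg_le : Rabs c * Rabs (g y - g x) <= eps / 2.
  have -> : eps / 2 = k * (eps / 2 / k) by field; lra.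
  by apply: Rmult_le_compat; [exact: Rabs_pos|exact: Rabs_pos|rewrite /k; lra|lra].
have -> : f y - c * g y - (f x - c * g x) = f y - f x + - c * (g y - g x) by ring.
by apply: Rle_lt_trans (Rabs_triang _ _) _; rewrite Rabs_mult Rabs_Ropp; lra.
Qed.

Lemma vcont_sqnorm : vcont (@sqnorm m).
Proof.
move=> x eps eps_gt0.
pose A := rsum (fun j => Rabs (x j)); pose K := INR m + 2 * A + 1.
have A_ge0 : 0 <= A by apply: rsum_ge0 => j; exact: Rabs_pos.
have K_gt0 : 0 < K by have := pos_INR m; rewrite /K; lra.
pose d := Rmin 1 (eps / K).
have d_gt0 : 0 < d by apply: Rmin_pos; [lra|apply: Rdiv_lt_0_compat].
have d_le1 : d <= 1 by apply: Rmin_l.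
have dK : d * K <= eps.
  have -> : eps = eps / K * K by field; lra.
  by apply: Rmult_le_compat_r; [lra|exact: Rmin_r].
exists d; split=> // y y_near.
have coord_near j : Rabs (y j - x j) < d.
  exact: Rle_lt_trans (Rabs_coord_le_vnorm (fun j => y j - x j) j) y_near.
rewrite /sqnorm -rsumB; apply: Rle_lt_trans (Rabs_rsum_le _) _.
apply: (Rle_lt_trans _ (rsum (fun j => d * (1 + 2 * Rabs (x j))))).
  by apply: rsum_le => j; apply: Rabs_sqr_sub_le (coord_near j) d_le1.
rewrite rsumZ rsumD rsumZ rsum_cst -/A.
have -> : d * (INR m * 1 + 2 * A) = d * K - d by rewrite /K; ring.
lra.
Qed.

End Norms.

Section OneVariable.
Implicit Types (F G : R -> R).

Lemma derivable_pt_lim_shift F s l :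
  derivable_pt_lim (fun t => F (s + t)) 0 l -> derivable_pt_lim F s l.
Proof.
move=> F_l eps eps_gt0; have [del F_del] := F_l eps eps_gt0.
by exists del => h h_neq0 h_lt; have := F_del h h_neq0 h_lt; rewrite Rplus_0_l Rplus_0_r.
Qed.

Lemma MVT_Rabs F G a b : (forall s, derivable_pt_lim F s (G s)) ->
  exists c, F b - F a = G c * (b - a) /\ Rabs (c - a) <= Rabs (b - a).
Proof.
move=> FG; have [ab|[<-|ba]] := Rtotal_order a b.
- have [c [Fc c_in]] := MVT_cor2 F G a b ab (fun c _ => FG c).
  by exists c; split=> //; rewrite !Rabs_pos_eq; lra.
- by exists a; split; [ring|right].
- have [c [Fc c_in]] := MVT_cor2 F G b a ba (fun c _ => FG c).
  by exists c; split; [lra|rewrite !Rabs_left; lra].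
Qed.

(* At the maximum G 0 = 0, so L > 0 would make F increase just right of 0. *)
Lemma second_derivative_le0_at_max F G L :
  (forall t, derivable_pt_lim F t (G t)) -> derivable_pt_lim G 0 L ->
  (forall t, F t <= F 0) -> L <= 0.
Proof.
move=> FG GL F_max; apply: Rnot_lt_le => L_gt0.
have G0 : G 0 = 0.
  rewrite -(derive_pt_eq_0 F 0 (G 0) (exist _ (G 0) (FG 0))) //.
  by apply: (deriv_maximum F (-1) 1) => *; [lra|lra|apply: F_max].
have [del G_del] := GL (L / 2) ltac:(lra); have del_gt0 := cond_pos del.
have [c [Fc c_in]] := MVT_cor2 F G 0 (del / 2) ltac:(lra) (fun c _ => FG c).
have := G_del c ltac:(lra) ltac:(rewrite Rabs_pos_eq; lra).
rewrite Rplus_0_l G0 Rminus_0_r => /Rabs_def2 [_ Gc_lower].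
have Gc_pos : 0 < G c.
  have -> : G c = G c / c * c by field; lra.
  by apply: Rmult_lt_0_compat; lra.
have := F_max (del / 2); nra.
Qed.

End OneVariable.

Lemma shift_shift {m : nat} (y : vec m) (i : 'I_m) (s t : R) :
  shift (shift y i s) i t = shift y i (s + t).
Proof. by apply: functional_extensionality => j; rewrite /shift; case: (j == i); lra. Qed.

Lemma shift0 {m : nat} (y : vec m) (i : 'I_m) : shift y i 0 = y.
Proof. by apply: functional_extensionality => j; rewrite /shift; case: (j == i); lra. Qed.

(* Moving one coordinate at a time along [line_on] reduces the chain rule to
   one-variable mean value arguments. *)
Definition line_on {m : nat} (l : seq 'I_m) (x p : vec m) (h : R) : vec m :=
  fun j => if j \in l then x j + h * p j else x j.

Lemma line_on_shift_coord_le {m : nat} {l : seq 'I_m} {x p : vec m} {h i c} j :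
  i \notin l -> Rabs c <= Rabs (h * p i) ->
  Rabs (shift (line_on l x p h) i c j - x j) <= Rabs h * Rabs (p j).
Proof.
move=> i_l c_le; rewrite -Rabs_mult /shift /line_on.
have [->|_] := eqVneq j i; first by rewrite (negbTE i_l) Rplus_minus_l.
case: (j \in l); first by rewrite Rplus_minus_l; right.
by rewrite Rminus_diag Rabs_R0; exact: Rabs_pos.
Qed.

Section DirectionalDerivative.
Variables (m : nat) (f : vec m -> R) (g : 'I_m -> vec m -> R).
Hypothesis f_partial : forall i y, has_partial f i y (g i y).
Hypothesis g_cont : forall i, vcont (g i).

Lemma derivable_pt_lim_along_coord y i s :
  derivable_pt_lim (fun t => f (shift y i t)) s (g i (shift y i s)).
Proof.
apply: derivable_pt_lim_shift.
by apply: (derivable_pt_lim_ext _ _ _ _ _ (f_partial i (shift y i s))) => t; rewrite shift_shift.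
Qed.

(* Mean value theorem in coordinate [i], then continuity of [g i] at [x]. *)
Lemma derivable_pt_lim_coord_step x p {l i} : i \notin l ->
  derivable_pt_lim (fun h => f (shift (line_on l x p h) i (h * p i)) - f (line_on l x p h))
    0 (p i * g i x).
Proof.
move=> i_l eps eps_gt0.
have pi_ge0 := Rabs_pos (p i).
pose e := eps / (Rabs (p i) + 1).
have e_gt0 : 0 < e by apply: Rdiv_lt_0_compat; lra.
have pi_e : Rabs (p i) * e < eps.
  have -> : eps = e * (Rabs (p i) + 1) by rewrite /e; field; lra.
  lra.
have [eta [eta_gt0 g_near]] := vcont_coordwise _ (g_cont i) x _ e_gt0.
pose B := vnorm p + 1.
have B_gt0 : 0 < B by have := Rle_trans _ _ _ pi_ge0 (Rabs_coord_le_vnorm p i); rewrite /B; lra.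
have del_gt0 : 0 < eta / B by apply: Rdiv_lt_0_compat.
exists (mkposreal _ del_gt0) => h h_neq0 /= h_lt.
have h_B : Rabs h * B < eta.
  have -> : eta = eta / B * B by field; lra.
  exact: Rmult_lt_compat_r.
pose y := line_on l x p h.
have [c [f_c c_le]] := MVT_Rabs _ _ 0 (h * p i) (derivable_pt_lim_along_coord y i).
rewrite shift0 !Rminus_0_r in f_c c_le.
have z_near j : Rabs (shift y i c j - x j) < eta.
  apply: Rle_lt_trans (line_on_shift_coord_le j i_l c_le) (Rle_lt_trans _ _ _ _ h_B).
  apply: Rmult_le_compat_l; first exact: Rabs_pos.
  by have := Rabs_coord_le_vnorm p j; rewrite /B; lra.
have := g_near _ z_near.
rewrite Rplus_0_l !Rmult_0_l shift0 Rminus_diag Rminus_0_r -/y f_c.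
have -> : g i (shift y i c) * (h * p i) / h - p i * g i x
          = p i * (g i (shift y i c) - g i x) by field.
rewrite Rabs_mult => g_lt; apply: Rle_lt_trans pi_e.
by apply: Rmult_le_compat_l; lra.
Qed.

Lemma derivable_pt_lim_line_on x p {l} : uniq l ->
  derivable_pt_lim (fun h => f (line_on l x p h)) 0 (\big[Rplus/0]_(i <- l) (p i * g i x)).
Proof.
elim: l => [_|i l IH /= /andP [i_l l_uniq]].
  rewrite big_nil; apply: (derivable_pt_lim_ext _ _ _ _ _ (derivable_pt_lim_const (f x) 0)) => h.
  by congr f; apply: functional_extensionality => j; rewrite /line_on in_nil.
rewrite big_cons.
apply: (derivable_pt_lim_ext _ _ _ _ _
  (derivable_pt_lim_plus _ _ _ _ _ (derivable_pt_lim_coord_step x p i_l) (IH l_uniq))) => h.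
have -> : line_on (i :: l) x p h = shift (line_on l x p h) i (h * p i).
  apply: functional_extensionality => j; rewrite /line_on /shift in_cons.
  by have [->|] := eqVneq j i; rewrite ?(negbTE i_l).
rewrite /plus_fct; ring.
Qed.

Lemma directional_derivative x p t :
  derivable_pt_lim (fun s => f (line x p s)) t (rsum (fun i => p i * g i (line x p t))).
Proof.
apply: derivable_pt_lim_shift.
have -> : rsum (fun i => p i * g i (line x p t))
          = \big[Rplus/0]_(i <- enum 'I_m) (p i * g i (line x p t)) by rewrite unlock.
apply: (derivable_pt_lim_ext _ _ _ _ _ (derivable_pt_lim_line_on (line x p t) p (enum_uniq _))) => s.
by congr f; apply: functional_extensionality => j; rewrite /line_on mem_enum inE /line; ring.
Qed.

End DirectionalDerivative.

Lemma derivable_pt_lim_rsum {m : nat} (F : 'I_m -> R -> R) (F' : 'I_m -> R) t :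
  (forall i, derivable_pt_lim (F i) t (F' i)) ->
  derivable_pt_lim (fun s => rsum (fun i => F i s)) t (rsum F').
Proof.
move=> FF'; rewrite /rsum; elim: (enum 'I_m) => [|i l IH] /=.
  exact: derivable_pt_lim_const.
exact: derivable_pt_lim_plus.
Qed.

Lemma derivable_pt_lim_poly2 a b c t :
  derivable_pt_lim (fun s => a + b * s + c * (s * s)) t (b + 2 * c * t).
Proof.
have D := derivable_pt_lim_plus _ _ _ _ _
  (derivable_pt_lim_plus _ _ _ _ _ (derivable_pt_lim_const a t)
     (derivable_pt_lim_scal _ b _ _ (derivable_pt_lim_id t)))
  (derivable_pt_lim_scal _ c _ _
     (derivable_pt_lim_mult _ _ _ _ _ (derivable_pt_lim_id t) (derivable_pt_lim_id t))).
have -> : b + 2 * c * t = 0 + b * 1 + c * (1 * id t + id t * 1) by rewrite /id; ring.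
exact: (derivable_pt_lim_ext _ _ _ _ _ D).
Qed.

Lemma Ck_vcont {m : nat} {k} {f : vec m -> R} : Ck k f -> vcont f.
Proof. by case: k => [|k] //= []. Qed.

Lemma Ck_partial {m : nat} {k} {f Df : vec m -> R} {i} :
  Ck k.+1 f -> (forall x, has_partial f i x (Df x)) -> Ck k Df.
Proof.
move=> [_ /(_ i) [g [f_g g_Ck]]] f_Df.
suff -> : Df = g by [].
by apply: functional_extensionality => x; exact: uniqueness_limite (f_Df x) (f_g x).
Qed.

Definition qform {m : nat} (H : 'I_m -> 'I_m -> R) (v : vec m) : R :=
  rsum (fun i => v i * rsum (fun j => v j * H i j)).

Lemma sqnorm_line {m : nat} (c v : vec m) t :
  sqnorm (line c v t) = sqnorm c + 2 * t * rsum (fun i => c i * v i) + t * t * sqnorm v.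
Proof. by rewrite /sqnorm -!rsumZ -!rsumD; apply: eq_rsum => i; rewrite /line; ring. Qed.

Lemma line0 {m : nat} (c v : vec m) : line c v 0 = c.
Proof. by apply: functional_extensionality => j; rewrite /line; ring. Qed.

Lemma qform_hessian_le_at_max {m : nat} {u : vec m -> R} {Du D2u}
  (u_Du : forall i x, has_partial u i x (Du i x))
  (Du_D2u : forall i j x, has_partial (Du i) j x (D2u i j x))
  (Du_cont : forall i, vcont (Du i)) (D2u_cont : forall i j, vcont (D2u i j))
  {eps : R} {c : vec m}
  (c_max : forall y, u y - eps * sqnorm y <= u c - eps * sqnorm c) (v : vec m) :
  qform (fun i j => D2u i j c) v <= 2 * eps * sqnorm v.
Proof.
pose b := rsum (fun i => c i * v i).
pose phi t := u (line c v t) - eps * (0 + 2 * b * t + sqnorm v * (t * t)).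
pose G t := rsum (fun i => v i * Du i (line c v t)) - eps * (2 * b + 2 * sqnorm v * t).
have phi_G t : derivable_pt_lim phi t (G t).
  apply: derivable_pt_lim_minus; first exact: directional_derivative.
  exact/derivable_pt_lim_scal/derivable_pt_lim_poly2.
have G_hess : derivable_pt_lim G 0 (qform (fun i j => D2u i j c) v - eps * (2 * sqnorm v)).
  apply: derivable_pt_lim_minus.
    apply: derivable_pt_lim_rsum => i; apply: derivable_pt_lim_scal.
    by rewrite -{2}(line0 c v); exact: directional_derivative.
  apply: derivable_pt_lim_scal.
  have -> : 2 * sqnorm v = 2 * sqnorm v + 2 * 0 * 0 by ring.
  apply: (derivable_pt_lim_ext _ _ _ _ _ (derivable_pt_lim_poly2 (2 * b) (2 * sqnorm v) 0 0)) => t; ring.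
have phi_max t : phi t <= phi 0.
  by have := c_max (line c v t); rewrite sqnorm_line -/b /phi line0; lra.
have := second_derivative_le0_at_max _ _ _ phi_G G_hess phi_max; lra.
Qed.

(* For such a [kappa], (I - kappa p p^T)^2 = I - p p^T / (1 + |p|^2) when |p|^2 = P. *)
Lemma sqrt_rank_one_coef {P} : 0 <= P -> exists kappa, kappa * (2 - kappa * P) = / (1 + P).
Proof.
move=> P_ge0; pose s := sqrt (1 + P).
have s_gt0 : 0 < s by apply: sqrt_lt_R0; lra.
have s_sqr : s * s = 1 + P by apply: sqrt_sqrt; lra.
exists (/ (s * (s + 1))); have -> : P = s * s - 1 by lra.
by field; split; nra.
Qed.

Section RankOnePerturbation.
Context {m : nat}.
Context {p : vec m} {kappa : R}.
Hypothesis kappa_sqrt : kappa * (2 - kappa * sqnorm p) = / (1 + sqnorm p).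

Let b (k i : 'I_m) : R := (if k == i then 1 else 0) - kappa * p k * p i.

Lemma rank_one_gram i j :
  rsum (fun k => b k i * b k j) = (if i == j then 1 else 0) - p i * p j / (1 + sqnorm p).
Proof.
rewrite (@eq_rsum _ _ (fun k =>
    (if k == i then 1 else 0) * (if k == j then 1 else 0)
    + - kappa * p j * ((if k == i then 1 else 0) * p k)
    + - kappa * p i * ((if k == j then 1 else 0) * p k)
    + kappa * kappa * p i * p j * (p k * p k))); last by move=> k; rewrite /b; ring.
rewrite !rsumD !rsumZ !rsum_delta -/(sqnorm p) /Rdiv -kappa_sqrt; ring.
Qed.

(* The rows [b k] of I - kappa p p^T give A = sum_k b_k b_k^T, hence
   tr (A H) = sum_k qform H (b k). *)
Lemma trace_le_of_qform_le {H : 'I_m -> 'I_m -> R} {lam} : 0 <= lam ->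
  (forall v, qform H v <= lam * sqnorm v) ->
  rsum (fun i => rsum (fun j =>
    ((if i == j then 1 else 0) - p i * p j / (1 + sqnorm p)) * H i j)) <= lam * INR m.
Proof.
move=> lam_ge0 H_le.
have sum_le := rsum_le _ _ (fun k => H_le (b k)); rewrite rsumZ in sum_le.
have <- : rsum (fun k => rsum (fun i => rsum (fun j => b k i * b k j * H i j)))
    = rsum (fun i => rsum (fun j =>
        ((if i == j then 1 else 0) - p i * p j / (1 + sqnorm p)) * H i j)).
  rewrite rsum_exchange; apply: eq_rsum => i; rewrite rsum_exchange; apply: eq_rsum => j.
  by rewrite -rank_one_gram Rmult_comm -rsumZ; apply: eq_rsum => k; ring.
have -> : rsum (fun k => rsum (fun i => rsum (fun j => b k i * b k j * H i j)))
    = rsum (fun k => qform H (b k)).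
  by apply: eq_rsum => k; apply: eq_rsum => i; rewrite -rsumZ; apply: eq_rsum => j; ring.
apply: Rle_trans sum_le _; apply: Rmult_le_compat_l => //.
rewrite /sqnorm rsum_exchange -[X in _ <= X]Rmult_1_r -rsum_cst.
apply: rsum_le => i; rewrite rank_one_gram eqxx.
suff : 0 <= p i * p i / (1 + sqnorm p) by lra.
apply: Rmult_le_pos; first nra.
by apply/Rlt_le/Rinv_0_lt_compat; have := sqnorm_ge0 p; lra.
Qed.

End RankOnePerturbation.

Lemma Rpower_lt_sqr_eventually beta K : 0 <= beta < 2 ->
  exists R0, 1 <= R0 /\ forall rho, R0 <= rho -> K * Rpower rho beta < rho * rho.
Proof.
move=> [beta_ge0 beta_lt2]; pose d := 2 - beta.
have d_gt0 : 0 < d by rewrite /d; lra.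
pose R1 := Rpower (Rabs K + 1) (/ d).
have R1_d : Rpower R1 d = Rabs K + 1.
  by rewrite /R1 Rpower_mult Rinv_l ?Rpower_1 //; [have := Rabs_pos K; lra|lra].
exists (Rmax 1 R1); split=> [|rho rho_ge]; first exact: Rmax_l.
have rho_ge1 : 1 <= rho := Rle_trans _ _ _ (Rmax_l _ _) rho_ge.
have R1_gt0 : 0 < R1 by apply: exp_pos.
have rho_d : Rabs K + 1 <= Rpower rho d.
  rewrite -R1_d; apply: Rle_Rpower_l; first lra.
  by split=> //; exact: Rle_trans (Rmax_r _ _) rho_ge.
have X_gt0 : 0 < Rpower rho beta by apply: exp_pos.
have -> : rho * rho = Rpower rho beta * Rpower rho d.
  rewrite -Rpower_plus (_ : beta + d = INR 2); last by rewrite /d /=; ring.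
  by rewrite Rpower_pow /=; [ring|lra].
have := Rle_abs K; nra.
Qed.

Lemma below_origin_far_away {m : nat} {u : vec m -> R} {C r alpha eps} :
  0 <= C -> 0 < eps -> alpha < 2 ->
  (forall x : vec m, r <= vnorm x -> Rabs (u x) <= C * Rpower (vnorm x) alpha) ->
  exists M, 0 <= M /\ forall y, M < vnorm y -> u y - eps * sqnorm y < u (fun _ => 0).
Proof.
move=> C_ge0 eps_gt0 alpha_lt2 u_growth.
pose beta := Rmax alpha 0; pose u0 := u (fun _ => 0).
have [R0 [R0_ge1 R0_lt]] := Rpower_lt_sqr_eventually beta ((C + Rabs u0) / eps)
  (conj (Rmax_r alpha 0) (Rmax_lub_lt _ _ _ alpha_lt2 Rlt_0_2)).
exists (Rmax r R0); split=> [|y y_far].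
  by apply: Rle_trans (Rmax_r _ _); lra.
have rho_r : r <= vnorm y by apply: Rlt_le; exact: Rle_lt_trans (Rmax_l _ _) y_far.
have rho_R0 : R0 <= vnorm y by apply: Rlt_le; exact: Rle_lt_trans (Rmax_r _ _) y_far.
have rho_ge1 : 1 <= vnorm y by lra.
have alpha_beta : Rpower (vnorm y) alpha <= Rpower (vnorm y) beta.
  exact/Rle_Rpower/Rmax_l.
have X_ge1 : 1 <= Rpower (vnorm y) beta.
  by rewrite -(Rpower_O (vnorm y)); [apply/Rle_Rpower/Rmax_r|lra].
have := R0_lt _ rho_R0; rewrite vnorm_sqr.
have -> : (C + Rabs u0) / eps * Rpower (vnorm y) beta
          = (C + Rabs u0) * Rpower (vnorm y) beta / eps by field; lra.
move=> /(Rmult_lt_compat_l eps _ _ eps_gt0).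
have -> : eps * ((C + Rabs u0) * Rpower (vnorm y) beta / eps)
          = (C + Rabs u0) * Rpower (vnorm y) beta by field; lra.
have := Rle_trans _ _ _ (Rle_abs _) (u_growth y rho_r).
have := Rabs_pos u0; have := Rle_abs (- u0); rewrite Rabs_Ropp.
rewrite -/u0; nra.
Qed.

Module BoxCompactness.
Import all_classical all_reals all_analysis Rstruct_topology.
Import numFieldNormedType.Exports.
Local Open Scope classical_set_scope.
Local Open Scope ring_scope.

Lemma vcont_max_on_box {m : nat} (F : vec m -> R) (M : R) : (0 <= M)%coqR -> vcont F ->
  exists c : vec m, (forall i, Rabs (c i) <= M)%coqR /\
    forall y : vec m, (forall i, Rabs (y i) <= M)%coqR -> (F y <= F c)%coqR.
Proof.
move=> /RleP M_ge0 F_cont.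
pose G (v : 'rV[R]_m) := F (fun i => v ord0 i).
pose box := [set v : 'rV[R]_m | forall i, `[(- M), M]%classic (v ord0 i)].
have box_compact : compact box.
  by apply: (@rV_compact _ _ (fun=> `[(- M), M]%classic)) => _; exact: segment_compact.
have box0 : box !=set0 by exists 0 => i /=; rewrite mxE in_itv /= oppr_le0 M_ge0.
have G_cont : continuous G.
  move=> v; apply/(@pseudometric_normed_Zmodule.cvgrPdist_lt _ R^o _ (nbhs v) (nbhs_filter v)).
  move=> e /RltP e_gt0.
  have [d [d_gt0 F_d]] := F_cont (fun i => v ord0 i) e e_gt0.
  have [eta [/RltP eta_gt0 eta_d]] := @vnorm_lt_of_coord_lt m _ d_gt0.
  apply/nbhs_ballP; exists eta => // y [_ y_near]; apply/RltP.
  rewrite distrC -RabsE; apply: F_d; apply: eta_d => j.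
  by have /RltP := y_near ord0 j; rewrite RabsE distrC.
have [c c_box c_max] := compact_EVT_max box0 box_compact (continuous_subspaceT G_cont).
exists (fun i => c ord0 i); split=> [i|y y_box].
  move: c_box; rewrite inE => /(_ i); rewrite /= in_itv /= => /andP [c_lo c_hi].
  by apply/RleP; rewrite RabsE ler_norml c_lo c_hi.
have y_in : (\row_i y i) \in box.
  rewrite inE => i /=; rewrite mxE in_itv /=.
  by have /RleP := y_box i; rewrite RabsE ler_norml.
have /RleP := c_max _ y_in; rewrite /G.
by have -> : (fun i => (\row_j y j) ord0 i) = y by apply: funext => i; rewrite mxE.
Qed.

End BoxCompactness.

Lemma vcont_attains_max {m : nat} {w : vec m -> R} {M} : 0 <= M -> vcont w ->
  (forall y, M < vnorm y -> w y < w (fun _ => 0)) -> exists c, forall y, w y <= w c.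
Proof.
move=> M_ge0 w_cont w_far.
have [c [_ c_max]] := BoxCompactness.vcont_max_on_box _ _ M_ge0 w_cont.
exists c => y; have [y_box|y_out] := classic (forall i, Rabs (y i) <= M).
  exact: c_max.
have [i /Rnot_le_lt y_i] := not_all_ex_not _ _ y_out.
have := w_far y (Rlt_le_trans _ _ _ y_i (Rabs_coord_le_vnorm y i)).
by have := c_max (fun _ => 0) (fun i => ltac:(rewrite Rabs_R0; lra)); lra.
Qed.

Lemma translator_dim_ge1 {m : nat} {Du : 'I_m -> vec m -> R} {D2u} :
  (forall x, translator_eq Du D2u x) -> 1 <= INR m.
Proof.
case: m Du D2u => [|m] Du D2u trans; last by rewrite S_INR; have := pos_INR m; lra.
by have := trans (fun _ => 0); rewrite /translator_eq rsum_bigE big_ord0 => /esym /R1_neq_R0.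
Qed.

Theorem mainTheorem7 (m : nat) (u : vec m -> R)
  (Du : 'I_m -> vec m -> R) (D2u : 'I_m -> 'I_m -> vec m -> R)
  (Hsmooth : smooth u)
  (HDu : forall i x, has_partial u i x (Du i x))
  (HD2u : forall i j x, has_partial (Du i) j x (D2u i j x))
  (Htrans : forall x, translator_eq Du D2u x)
  (C r alpha : R) (HC : 0 < C) (Hr : 0 < r)
  (Hgrowth : forall x : vec m, r <= vnorm x -> Rabs (u x) <= C * Rpower (vnorm x) alpha) :
  2 <= alpha.
Proof.
have m_ge1 := translator_dim_ge1 Htrans.
apply: Rnot_lt_le => alpha_lt2.
have Du_C1 i : Ck 1 (Du i) := Ck_partial (Hsmooth 2%N) (HDu i).
have Du_cont i : vcont (Du i) := Ck_vcont (Du_C1 i).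
have D2u_cont i j : vcont (D2u i j) := Ck_vcont (Ck_partial (Du_C1 i) (HD2u i j)).
pose eps := / (4 * INR m).
have eps_gt0 : 0 < eps by apply: Rinv_0_lt_compat; lra.
have [c c_max] : exists c, forall y, u y - eps * sqnorm y <= u c - eps * sqnorm c.
  have [M [M_ge0 u_far]] := below_origin_far_away (Rlt_le _ _ HC) eps_gt0 alpha_lt2 Hgrowth.
  apply: (vcont_attains_max M_ge0 (vcont_subZ eps (Ck_vcont (Hsmooth 0%N)) vcont_sqnorm)) => y.
  by rewrite sqnorm0 Rmult_0_r Rminus_0_r; exact: u_far.
have hess := qform_hessian_le_at_max HDu HD2u Du_cont D2u_cont c_max.
have [kappa kappa_sqrt] := sqrt_rank_one_coef (sqnorm_ge0 (fun i => Du i c)).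
have trace_le := trace_le_of_qform_le kappa_sqrt (Rlt_le _ _ (Rmult_lt_0_compat _ _ Rlt_0_2 eps_gt0)) hess.
have : 1 <= 2 * eps * INR m by rewrite -(Htrans c); exact: trace_le.
have : 2 * eps * INR m = / 2 by rewrite /eps; field; lra.
lra.
Qed.
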